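(* Let $y\in\mathbb R^n$, $Z\in\mathbb R^{n\times m}$ and $A\in\mathbb R^{r\times m}$, and for $\theta\in\mathbb R^m$ write $|\theta|=\sum_{l}|\theta_l|$ for the $L_1$-norm. For $\gamma\ge0$ and $\lambda\ge0$ let $\hat\theta_{\gamma,\lambda}$ be a minimizer of $$(y-Z\theta)^T(y-Z\theta)+\gamma(A\theta)^TA\theta+\lambda|\theta|$$ over $\theta\in\mathbb R^m$ (assumed to exist). Let $\hat\theta^{(LS)}$ be a minimizer of $(y-Z\theta)^T(y-Z\theta)$ over all $\theta\in\mathbb R^m$ which additionally satisfies $A\hat\theta^{(LS)}=0$ (assumed to exist). Define $\Delta_{\gamma,\lambda}=(A\hat\theta_{\gamma,\lambda})^TA\hat\theta_{\gamma,\lambda}$. Then for every $\gamma>0$ and $\lambda\ge0$, $$\Delta_{\gamma,\lambda}\le\frac{\lambda\bigl(|\hat\theta^{(LS)}|-|\hat\theta_{0,\lambda}|\bigr)}{\gamma}.$$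
   Context: In the paper's application, $\theta=(\theta_{10},\theta_{20},\dots,\theta_{k,k-1})^T$ collects the pairwise differences $\theta_{ij}=\beta_i-\beta_j$ ($0\le j<i\le k$) of dummy coefficients of a nominal predictor, $A\theta=0$ encodes the restrictions $\theta_{ij}=\theta_{i0}-\theta_{j0}$ for all $i>j>0$, and $Z=(X\,|\,0)$ so that $Z\theta=X\beta$; the statement, however, holds for arbitrary $y,Z,A$ as stated. *)

(* real numbers modelled by an arbitrary realFieldType
   (the statement is purely algebraic/order-theoretic). *)
From HB Require Import structures.
From mathcomp Require Import all_boot all_order all_algebra.
Set Implicit Arguments. Unset Strict Implicit. Unset Printing Implicit Defensive.
Import Order.TTheory GRing.Theory Num.Theory.
Local Open Scope ring_scope.

Definition sqform (R : realFieldType) (k : nat) (v : 'cV[R]_k) : R :=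
  (v^T *m v) 0 0.

Definition l1norm (R : realFieldType) (k : nat) (v : 'cV[R]_k) : R :=
  \sum_(l < k) `|v l 0|.

Definition rss (R : realFieldType) (n m : nat) (y : 'cV[R]_n) (Z : 'M[R]_(n, m))
  (theta : 'cV[R]_m) : R := sqform (y - Z *m theta).

Definition penobj (R : realFieldType) (n m r : nat) (y : 'cV[R]_n)
  (Z : 'M[R]_(n, m)) (A : 'M[R]_(r, m)) (gamma lambda : R) (theta : 'cV[R]_m) : R :=
  rss y Z theta + gamma * sqform (A *m theta) + lambda * l1norm theta.

Definition is_minimizer (R : realFieldType) (m : nat) (f : 'cV[R]_m -> R)
  (theta : 'cV[R]_m) : Prop := forall theta' : 'cV[R]_m, f theta <= f theta'.

From HB Require Import structures.
From mathcomp Require Import all_boot all_order all_algebra.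
From mathcomp Require Import lra.
Import Order.TTheory GRing.Theory Num.Theory.
Local Open Scope ring_scope.

(* Compare the penalized minimizer with the constrained least-squares fit
   (on which the ridge term vanishes), the lasso minimizer with the penalized
   one, and the least-squares fit with the lasso minimizer; adding the three
   optimality inequalities cancels every residual and lasso term and leaves
   [gamma * Delta <= lambda * (|theta_LS| - |theta_0l|)]. *)

Lemma sqform0 (R : realFieldType) (k : nat) : sqform (0 : 'cV[R]_k) = 0.
Proof. by rewrite /sqform trmx0 mul0mx mxE. Qed.

Lemma penobj_gamma0 (R : realFieldType) (n m r : nat) (y : 'cV[R]_n)
    (Z : 'M[R]_(n, m)) (A : 'M[R]_(r, m)) (lambda : R) (theta : 'cV[R]_m) :
  penobj y Z A 0 lambda theta = rss y Z theta + lambda * l1norm theta.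
Proof. by rewrite /penobj mul0r addr0. Qed.

Lemma penobj_kerA (R : realFieldType) (n m r : nat) (y : 'cV[R]_n)
    (Z : 'M[R]_(n, m)) (A : 'M[R]_(r, m)) (gamma lambda : R) (theta : 'cV[R]_m) :
  A *m theta = 0 ->
  penobj y Z A gamma lambda theta = rss y Z theta + lambda * l1norm theta.
Proof. by move=> Atheta0; rewrite /penobj Atheta0 sqform0 mulr0 addr0. Qed.

(* No sign condition on [lambda] is needed. *)
Lemma penalty_le_gap (R : realDomainType) (T : Type) (f P N : T -> R)
    (gamma lambda : R) (t_gl t_0l t_LS : T) :
  f t_gl + gamma * P t_gl + lambda * N t_gl <= f t_LS + lambda * N t_LS ->
  f t_0l + lambda * N t_0l <= f t_gl + lambda * N t_gl ->
  f t_LS <= f t_0l ->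
  gamma * P t_gl <= lambda * (N t_LS - N t_0l).
Proof. by move=> *; rewrite mulrBr; lra. Qed.

Theorem proposition4 (R : realFieldType) (n m r : nat)
  (y : 'cV[R]_n) (Z : 'M[R]_(n, m)) (A : 'M[R]_(r, m))
  (gamma lambda : R) (theta_gl theta_0l theta_LS : 'cV[R]_m) :
  0 < gamma -> 0 <= lambda ->
  is_minimizer (penobj y Z A gamma lambda) theta_gl ->
  is_minimizer (penobj y Z A 0 lambda) theta_0l ->
  is_minimizer (rss y Z) theta_LS ->
  A *m theta_LS = 0 ->
  sqform (A *m theta_gl) <= lambda * (l1norm theta_LS - l1norm theta_0l) / gamma.
Proof.
move=> gamma_gt0 _ min_gl min_0l min_LS A_LS0.
have gl_vs_LS := min_gl theta_LS.
rewrite [in X in _ <= X]penobj_kerA // in gl_vs_LS.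
have lasso_vs_gl := min_0l theta_gl.
rewrite !penobj_gamma0 in lasso_vs_gl.
rewrite ler_pdivlMr // mulrC.
exact: (@penalty_le_gap R _ (rss y Z) (fun t => sqform (A *m t))
  (@l1norm R m)) gl_vs_LS lasso_vs_gl (min_LS theta_0l).
Qed.
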